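(* For all integers $1\le m\le n$, \[ S(n,m) = 1 + \sum_{x=m}^{\lfloor n/2\rfloor}\bigl(S(n-x,x)+1\bigr), \] where the sum is empty (and $S(n,m)=1$) when $m>\lfloor n/2\rfloor$.
   Context: An ascending composition of a positive integer $n$ is a finite sequence of positive integers $(a_1,\dots,a_k)$, $k\ge1$, with $a_1+\dots+a_k=n$ and $a_1\le\dots\le a_k$. For $1\le m\le n$, $\mathcal{A}(n,m)$ is the set of ascending compositions of $n$ with $a_1\ge m$. List the elements of $\mathcal{A}(n,m)$ in increasing lexicographic order as $b^{(1)},\dots,b^{(N)}$. The suffix length $S(n,m)$ is defined as the number of parts of $b^{(1)}$ plus, for each $i=1,\dots,N-1$, the number of parts of $b^{(i+1)}$ lying beyond the longest common prefix of $b^{(i)}$ and $b^{(i+1)}$. *)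

From mathcomp Require Import all_boot.
Set Implicit Arguments. Unset Strict Implicit. Unset Printing Implicit Defensive.

Definition is_asc_comp (n m : nat) (s : seq nat) : bool :=
  [&& s != [::], all (fun a => 0 < a) s, sorted leq s, sumn s == n
    & m <= head 0 s].

(* All sequences of length <= k with entries in {1,...,n}: a finite
   superset of the ascending compositions of n (take k = n). *)
Fixpoint all_seqs (k n : nat) : seq (seq nat) :=
  match k with
  | 0 => [:: [::]]
  | k'.+1 => [::] :: [seq x :: s | x <- iota 1 n, s <- all_seqs k' n]
  end.

Fixpoint lexle (s t : seq nat) : bool :=
  match s, t with
  | [::], _ => true
  | _ :: _, [::] => false
  | x :: s', y :: t' => (x < y) || ((x == y) && lexle s' t')
  end.

Definition asc_comps (n m : nat) : seq (seq nat) :=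
  sort lexle (undup (filter (is_asc_comp n m) (all_seqs n n))).

Fixpoint lcp (s t : seq nat) : nat :=
  match s, t with
  | x :: s', y :: t' => if x == y then (lcp s' t').+1 else 0
  | _, _ => 0
  end.

Definition suffix_length (n m : nat) : nat :=
  match asc_comps n m with
  | [::] => 0
  | b :: rest => size b + sumn (pairmap (fun a c => size c - lcp a c) b rest)
  end.

From mathcomp Require Import all_boot all_order zify.
Import Order.TTheory.
Set Implicit Arguments. Unset Strict Implicit. Unset Printing Implicit Defensive.

(* In lexicographic order, A(n,m) is a sequence of blocks, one for each first
   part x with m <= x <= n/2, listing x :: c for c in A(n-x,x) in order, and
   then the composition [n] alone.  Inside a block the common first part adds
   one to every common prefix, so the block contributes S(n-x,x) + 1 (the 1
   being for its first element); consecutive blocks start with different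
   parts, so their contributions simply add up. *)

Local Notation ltxi := (<%O : rel (seqlexi nat)).

Lemma lexleE : lexle =2 (<=%O : rel (seqlexi nat)).
Proof.
elim=> [|x s IHs] [|y t] //=; rewrite lexi_cons IHs leEnat.
by case: ltngtP.
Qed.

Lemma sorted_asc_comps n m : sorted ltxi (asc_comps n m).
Proof.
rewrite lt_sorted_uniq_le sort_uniq undup_uniq /=.
rewrite -(eq_sorted lexleE) sort_sorted // => s t.
by rewrite !lexleE le_total.
Qed.

Lemma mem_all_seqs k N s :
  size s <= k -> all (fun a => 0 < a <= N) s -> s \in all_seqs k N.
Proof.
elim: k s => [|k IHk] [|a s] //= le_sk /andP[a_range s_range].
by rewrite inE allpairs_f ?IHk // mem_iota add1n ltnS.
Qed.

Lemma size_le_sumn s : all (fun a => 0 < a) s -> size s <= sumn s.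
Proof.
by elim: s => //= a s IHs /andP[a_gt0 /IHs]; rewrite -add1n; apply: leq_add.
Qed.

Lemma leq_sumn a s : a \in s -> a <= sumn s.
Proof.
elim: s => //= b s IHs; rewrite inE => /predU1P[->|/IHs]; first exact: leq_addr.
by move/leq_trans; apply; apply: leq_addl.
Qed.

Lemma mem_asc_comps n m s : (s \in asc_comps n m) = is_asc_comp n m s.
Proof.
rewrite mem_sort mem_undup mem_filter andb_idr //.
case/and5P=> _ s_pos _ /eqP <- _.
apply: mem_all_seqs; first exact: size_le_sumn.
by apply/allP=> a a_s; rewrite (allP s_pos) // leq_sumn.
Qed.

Lemma asc_comp_le n m s : is_asc_comp n m s -> m <= n.
Proof.
case: s => [//|a s] /and5P[_ _ _ /eqP <- /= le_ma].
exact: leq_trans le_ma (leq_addr _ _).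
Qed.

Lemma is_asc_comp1 n m x :
  is_asc_comp n m [:: x] = [&& x == n, 0 < n & m <= n].
Proof.
by rewrite /is_asc_comp /= addn0 andbT; case: eqVneq => [->|]; rewrite ?andbF.
Qed.

Lemma is_asc_comp_cons n m x y c :
  is_asc_comp n m [:: x, y & c] =
  [&& 0 < x, m <= x, x <= n & is_asc_comp (n - x) x (y :: c)].
Proof.
rewrite /is_asc_comp /= -!andbA; case: (posnP x) => [->|x_gt0] //=.
have -> : (x + (y + sumn c) == n) = (x <= n) && (y + sumn c == n - x) by lia.
by case: (y + sumn c == n - x); case: (0 < y); case: (x <= y); case: (m <= x);
  case: (x <= n); rewrite /= ?andbF ?andbT.
Qed.

Definition suffix_cost (L : seq (seq nat)) : nat :=
  if L is b :: rest
  then size b + sumn (pairmap (fun a c => size c - lcp a c) b rest)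
  else 0.

Lemma suffix_lengthE n m : suffix_length n m = suffix_cost (asc_comps n m).
Proof. by []. Qed.

Lemma suffix_cost_cat A B :
  lcp (last [::] A) (head [::] B) = 0 ->
  suffix_cost (A ++ B) = suffix_cost A + suffix_cost B.
Proof.
case: A => [//|a A]; case: B => [|b B] /= lcp0; first by rewrite cats0 addn0.
by rewrite pairmap_cat sumn_cat /= lcp0 subn0 !addnA.
Qed.

Lemma suffix_cost_map_cons x L :
  suffix_cost (map (cons x) L) = suffix_cost L + (L != [::]).
Proof.
case: L => [//|b L] /=; rewrite addn1 addSn; congr (_.+1 + sumn _).
by elim: L b => //= c L IHL b; rewrite eqxx subSS IHL.
Qed.

Lemma sorted_ltxi_cat A B :
  sorted ltxi (A ++ B) = [&& allrel ltxi A B, sorted ltxi A & sorted ltxi B].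
Proof. by rewrite !lt_sorted_pairwise pairwise_cat. Qed.

Lemma sorted_ltxi_map_cons x L : sorted ltxi (map (cons x) L) = sorted ltxi L.
Proof.
by rewrite sorted_map; apply: eq_sorted => a b /=; rewrite ltxi_cons lexx.
Qed.

Lemma lcp_cons_eq0 x d t : head 0 t != x -> lcp (x :: d) t = 0.
Proof. by case: t => //= y t; rewrite eq_sym => /negbTE->. Qed.

Section Blocks.

Variable G : nat -> seq (seq nat).

Definition blocks (xs : seq nat) : seq (seq nat) :=
  flatten [seq map (cons x) (G x) | x <- xs].

Lemma blocks_cons x xs : blocks (x :: xs) = map (cons x) (G x) ++ blocks xs.
Proof. by []. Qed.

Lemma mem_blocks xs s :
  (s \in blocks xs) = if s is y :: c then (y \in xs) && (c \in G y) else false.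
Proof.
case: s => [|y c]; first by apply/flatten_mapP=> -[x _ /mapP[]].
apply/flatten_mapP/andP=> [[x x_xs /mapP[c' c'_G [-> ->]]]|[y_xs c_G]] //.
by exists y; rewrite ?map_f.
Qed.

Lemma sorted_blocks xs :
  sorted ltn xs -> {in xs, forall x, sorted ltxi (G x)} ->
  sorted ltxi (blocks xs).
Proof.
elim: xs => //= x xs IHxs; rewrite (path_sortedE ltn_trans).
move=> /andP[/allP x_lt sorted_xs] sorted_G.
have sorted_blocks_xs : sorted ltxi (blocks xs).
  by apply: IHxs => // y y_xs; rewrite sorted_G // inE y_xs orbT.
rewrite blocks_cons sorted_ltxi_cat sorted_ltxi_map_cons sorted_blocks_xs andbT.
rewrite sorted_G ?mem_head // andbT.
apply/allrelP=> a b /mapP[c _ ->]; case: b => [|y d]; rewrite mem_blocks //.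
case/andP=> y_xs _.
by rewrite neqhead_ltxiE ?ltEnat /= ?x_lt // neq_ltn x_lt.
Qed.

Lemma head_blocks_cat xs L :
  {in xs, forall x, G x != [::]} ->
  head 0 (head [::] (blocks xs ++ L)) = head (head 0 (head [::] L)) xs.
Proof.
case: xs => [//|x xs] G_ne; rewrite blocks_cons -catA.
by case: (G x) (G_ne x (mem_head x xs)).
Qed.

Lemma suffix_cost_blocks xs L :
  sorted ltn xs -> {in xs, forall x, G x != [::]} ->
  head 0 (head [::] L) \notin xs ->
  suffix_cost (blocks xs ++ L) =
    \sum_(x <- xs) (suffix_cost (G x) + 1) + suffix_cost L.
Proof.
elim: xs => [|x xs IHxs] /=; first by rewrite big_nil.
rewrite (path_sortedE ltn_trans) inE negb_or.
move=> /andP[/allP x_lt sorted_xs] G_ne /andP[L_x L_xs].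
have G_ne_xs : {in xs, forall y, G y != [::]}.
  by move=> y y_xs; rewrite G_ne // inE y_xs orbT.
rewrite blocks_cons -catA suffix_cost_cat.
  by rewrite suffix_cost_map_cons G_ne ?mem_head // IHxs // big_cons !addnA.
case: (G x) (G_ne x (mem_head x xs)) => // g gs _ /=.
rewrite last_map lcp_cons_eq0 // head_blocks_cat //.
case: xs x_lt {IHxs sorted_xs G_ne G_ne_xs L_xs} => //= y ys x_lt.
by rewrite gtn_eqF ?x_lt ?mem_head.
Qed.

End Blocks.

Lemma asc_comps_neq0 n m : 0 < m <= n -> asc_comps n m != [::].
Proof.
move=> /andP[m_gt0 le_mn]; apply/negP=> /eqP asc_nil.
have := mem_asc_comps n m [:: n].
by rewrite asc_nil is_asc_comp1 eqxx le_mn (leq_trans m_gt0).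
Qed.

Lemma asc_comps_rec n m :
  0 < m <= n ->
  asc_comps n m =
    blocks (fun x => asc_comps (n - x) x) (index_iota m n./2.+1) ++ [:: [:: n]].
Proof.
move=> /andP[m_gt0 le_mn].
apply: (lt_sorted_eq (T := seqlexi nat)); first exact: sorted_asc_comps.
  rewrite sorted_ltxi_cat sorted_blocks ?iota_ltn_sorted ?andbT //.
    apply/allrelP=> [] [|x c] t; rewrite mem_blocks // => /andP[x_range _].
    rewrite inE => /eqP->; move: x_range; rewrite mem_index_iota => x_range.
    have lt_xn : x < n by lia.
    by rewrite neqhead_ltxiE ?(ltn_eqF lt_xn).
  by move=> x _; apply: sorted_asc_comps.
move=> s; rewrite mem_asc_comps mem_cat mem_blocks mem_seq1.
case: s => [|x [|y c]] //.
  by rewrite mem_asc_comps is_asc_comp1 andbF le_mn (leq_trans m_gt0).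
rewrite eqseq_cons andbF orbF mem_index_iota mem_asc_comps is_asc_comp_cons.
case asc_c: (is_asc_comp (n - x) x (y :: c)); rewrite ?andbF //.
have := asc_comp_le asc_c; lia.
Qed.

Theorem mainTheorem3 (n m : nat) :
  1 <= m -> m <= n ->
  suffix_length n m =
    1 + \sum_(m <= x < n./2.+1) (suffix_length (n - x) x + 1).
Proof.
move=> m_gt0 le_mn.
rewrite suffix_lengthE asc_comps_rec ?m_gt0 // suffix_cost_blocks.
- by rewrite addnC.
- exact: iota_ltn_sorted.
- by move=> x; rewrite mem_index_iota => x_range; apply: asc_comps_neq0; lia.
- by rewrite /= mem_index_iota; apply/negP=> /andP[_]; lia.
Qed.
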